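(* Let $Z$ be a separable metric space on which a group $G$ acts by isometries such that some $G$-orbit is dense in $Z$. If there exists a finite, nonzero, $G$-invariant Borel measure $\mu$ on $Z$, then $Z$ is totally bounded. *)

From Stdlib Require Import Reals List.
Open Scope R_scope.

Section Defs.
Context {X : Type} (d : X -> X -> R).

Definition is_metric : Prop :=
  (forall x y, 0 <= d x y) /\
  (forall x y, d x y = 0 <-> x = y) /\
  (forall x y, d x y = d y x) /\
  (forall x y z, d x z <= d x y + d y z).

Definition countable_set (D : X -> Prop) : Prop :=
  exists f : X -> nat, forall x y, D x -> D y -> f x = f y -> x = y.

Definition dense_set (D : X -> Prop) : Prop :=
  forall x eps, 0 < eps -> exists y, D y /\ d x y < eps.

Definition separable : Prop :=
  exists D : X -> Prop, countable_set D /\ dense_set D.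

Definition totally_bounded : Prop :=
  forall eps, 0 < eps -> exists l : list X, forall x, exists y, In y l /\ d x y < eps.

Definition open_set (U : X -> Prop) : Prop :=
  forall x, U x -> exists eps, 0 < eps /\ forall y, d x y < eps -> U y.

Definition sigma_algebra (S : (X -> Prop) -> Prop) : Prop :=
  S (fun _ => True) /\
  (forall A, S A -> S (fun x => ~ A x)) /\
  (forall A : nat -> X -> Prop, (forall n, S (A n)) -> S (fun x => exists n, A n x)).

Definition borel (A : X -> Prop) : Prop :=
  forall S, sigma_algebra S -> (forall U, open_set U -> S U) -> S A.

(** a finite (real-valued) Borel measure: nonnegative, mu(empty)=0,
    countably additive on Borel sets; values on non-Borel sets are irrelevant *)
Definition finite_borel_measure (mu : (X -> Prop) -> R) : Prop :=
  mu (fun _ => False) = 0 /\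
  (forall A, borel A -> 0 <= mu A) /\
  (forall A : nat -> X -> Prop,
      (forall n, borel (A n)) ->
      (forall n m x, n <> m -> A n x -> A m x -> False) ->
      infinite_sum (fun n => mu (A n)) (mu (fun x => exists n, A n x))).
End Defs.

Definition is_group {G : Type} (mul : G -> G -> G) (inv : G -> G) (e : G) : Prop :=
  (forall a b c, mul a (mul b c) = mul (mul a b) c) /\
  (forall a, mul e a = a /\ mul a e = a) /\
  (forall a, mul (inv a) a = e /\ mul a (inv a) = e).

Definition is_action {G X : Type} (mul : G -> G -> G) (e : G) (act : G -> X -> X) : Prop :=
  (forall x, act e x = x) /\ (forall g h x, act (mul g h) x = act g (act h x)).

Definition acts_by_isometries {G X : Type} (d : X -> X -> R) (act : G -> X -> X) : Prop :=
  forall g x y, d (act g x) (act g y) = d x y.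

Definition has_dense_orbit {G X : Type} (d : X -> X -> R) (act : G -> X -> X) : Prop :=
  exists x0, forall z eps, 0 < eps -> exists g, d z (act g x0) < eps.

Definition invariant_measure {G X : Type} (d : X -> X -> R) (act : G -> X -> X)
  (mu : (X -> Prop) -> R) : Prop :=
  forall g A, borel d A -> mu (fun x => A (act g x)) = mu A.

(* Since G acts by isometries and preserves mu, all balls of radius r centered
   on an orbit have the same measure. This measure is positive: every ball of
   radius r/2 lies in such a ball, and countably many balls of radius r/2 around
   a countable dense set cover Z, which has nonzero measure. If Z were not
   totally bounded, the dense orbit would contain an infinite eps-separated
   sequence; the balls of radius eps/2 around it are disjoint and all have the
   same positive measure, which a finite countably additive mu cannot allow. *)
From Pilot Require Import Defs.
From Stdlib Require Import Reals List Arith Lra Lia.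
From Stdlib Require Import Classical ClassicalEpsilon FunctionalExtensionality PropExtensionality.
Open Scope R_scope.

Lemma pred_ext {X : Type} (P Q : X -> Prop) : (forall x, P x <-> Q x) -> P = Q.
Proof.
  intro H; apply functional_extensionality; intro x.
  apply propositional_extensionality; auto.
Qed.

Lemma infinite_sum_zero (s : nat -> R) : (forall n, s n = 0) -> infinite_sum s 0.
Proof.
  intros Hs eps Heps; exists 0%nat; intros n _.
  assert (Hsum : sum_f_R0 s n = 0).
  { induction n as [|n IH]; simpl; rewrite ?IH, Hs; lra. }
  rewrite Hsum; unfold R_dist; rewrite Rminus_diag, Rabs_R0; lra.
Qed.

Lemma infinite_sum_const_pos (c l : R) : 0 < c -> ~ infinite_sum (fun _ => c) l.
Proof.
  intros Hc Hsum.
  destruct (INR_unbounded (l / c)) as [n Hn].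
  assert (Hle : sum_f_R0 (fun _ => c) n <= l) by (apply sum_incr; auto; intros; lra).
  rewrite sum_cte, S_INR in Hle.
  assert (Hlt : l < c * INR n).
  { replace l with (c * (l / c)) by (field; lra). apply Rmult_lt_compat_l; lra. }
  lra.
Qed.

Section Borel.
Context {X : Type} (d : X -> X -> R).

Lemma borel_open (U : X -> Prop) : Defs.open_set d U -> borel d U.
Proof. intros HU S HS Hopen; auto. Qed.

Lemma borel_compl (A : X -> Prop) : borel d A -> borel d (fun x => ~ A x).
Proof. intros HA S HS Hopen; apply (proj1 (proj2 HS)), HA; auto. Qed.

Lemma borel_union (A : nat -> X -> Prop) :
  (forall n, borel d (A n)) -> borel d (fun x => exists n, A n x).
Proof. intros HA S HS Hopen; apply (proj2 (proj2 HS)); intro n; apply HA; auto. Qed.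

Lemma borel_True : borel d (fun _ => True).
Proof. intros S HS _; apply HS. Qed.

Lemma borel_False : borel d (fun _ => False).
Proof. apply borel_open; intros x []. Qed.

Lemma borel_inter (A B : X -> Prop) :
  borel d A -> borel d B -> borel d (fun x => A x /\ B x).
Proof.
  intros HA HB.
  set (C := fun n x => match n with 0%nat => ~ A x | _ => ~ B x end).
  replace (fun x => A x /\ B x) with (fun x => ~ exists n, C n x).
  - apply borel_compl, borel_union; intros [|n]; apply borel_compl; auto.
  - apply pred_ext; intro x; split.
    + intro H; split; apply NNPP; intro H'; apply H;
        [exists 0%nat | exists 1%nat]; exact H'.
    + intros [Ha Hb] [[|n] Hn]; auto.
Qed.

Lemma borel_none_before (A : nat -> X -> Prop) (n : nat) :
  (forall k, borel d (A k)) -> borel d (fun x => forall k, (k < n)%nat -> ~ A k x).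
Proof.
  intro HA; induction n as [|n IH].
  - replace (fun x => forall k, (k < 0)%nat -> ~ A k x) with (fun _ : X => True).
    + apply borel_True.
    + apply pred_ext; intro x; split; auto; intros _ k Hk; lia.
  - replace (fun x => forall k, (k < S n)%nat -> ~ A k x)
      with (fun x => (forall k, (k < n)%nat -> ~ A k x) /\ ~ A n x).
    + apply borel_inter; auto; apply borel_compl; auto.
    + apply pred_ext; intro x; split.
      * intros [Hlt Hn] k Hk.
        destruct (Nat.eq_dec k n) as [->|]; auto; apply Hlt; lia.
      * intro H; split; intros; apply H; lia.
Qed.

End Borel.

Section Measure.
Context {X : Type} (d : X -> X -> R) (mu : (X -> Prop) -> R).
Hypothesis Hmu : finite_borel_measure d mu.

Lemma measure_ge0 (A : X -> Prop) : borel d A -> 0 <= mu A.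
Proof. apply Hmu. Qed.

Lemma measure_le (P Q : X -> Prop) : borel d P -> borel d Q ->
  (forall x, P x -> Q x) -> mu P <= mu Q.
Proof.
  intros HP HQ HPQ.
  set (C := fun n => match n with
                     | 0%nat => P
                     | 1%nat => fun x => Q x /\ ~ P x
                     | _ => fun _ => False end).
  assert (HC : forall n, borel d (C n)).
  { intros [|[|n]]; simpl; auto using borel_inter, borel_compl, borel_False. }
  assert (Hdisj : forall n m x, n <> m -> C n x -> C m x -> False).
  { intros [|[|n]] [|[|m]] x Hnm; simpl; intros; try tauto; congruence. }
  assert (Hcover : (fun x => exists n, C n x) = Q).
  { apply pred_ext; intro x; split.
    - intros [[|[|n]] Hn]; simpl in Hn; [apply HPQ; auto | tauto | tauto].
    - intro Hq; destruct (classic (P x)).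
      + exists 0%nat; auto.
      + exists 1%nat; simpl; auto. }
  pose proof (proj2 (proj2 Hmu) C HC Hdisj) as Hsum; rewrite Hcover in Hsum.
  (* the first partial sum of the series is mu P *)
  apply (sum_incr _ 0 _ Hsum).
  intro n; apply measure_ge0, HC.
Qed.

Lemma measure_union_null (A : nat -> X -> Prop) :
  (forall n, borel d (A n)) -> (forall n, mu (A n) = 0) ->
  mu (fun x => exists n, A n x) = 0.
Proof.
  intros HA Hnull.
  set (B := fun n x => A n x /\ forall k, (k < n)%nat -> ~ A k x).
  assert (HB : forall n, borel d (B n)).
  { intro n; apply borel_inter; auto using borel_none_before. }
  assert (Hdisj : forall n m x, n <> m -> B n x -> B m x -> False).
  { intros n m x Hnm [Hn Hn'] [Hm Hm'].
    destruct (proj1 (Nat.lt_gt_cases n m) Hnm); [apply (Hm' n) | apply (Hn' m)]; auto. }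
  assert (Hcover : (fun x => exists n, B n x) = (fun x => exists n, A n x)).
  { apply pred_ext; intro x; split.
    - intros [n [Hn _]]; eauto.
    - intros [n Hn]; revert Hn.
      induction n as [n IH] using (well_founded_induction lt_wf); intro Hn.
      destruct (classic (exists k, (k < n)%nat /\ A k x)) as [[k [Hk Hak]]|Hfirst].
      + apply (IH k); auto.
      + exists n; split; auto; intros k Hk Hak; apply Hfirst; eauto. }
  assert (HBnull : forall n, mu (B n) = 0).
  { intro n.
    pose proof (measure_le (B n) (A n) (HB n) (HA n) (fun x H => proj1 H)).
    pose proof (measure_ge0 (B n) (HB n)). rewrite Hnull in *; lra. }
  pose proof (proj2 (proj2 Hmu) B HB Hdisj) as Hsum; rewrite Hcover in Hsum.
  exact (uniqueness_sum _ _ _ Hsum (infinite_sum_zero _ HBnull)).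
Qed.

Lemma measure_disjoint_const_le0 (A : nat -> X -> Prop) (c : R) :
  (forall n, borel d (A n)) -> (forall n m x, n <> m -> A n x -> A m x -> False) ->
  (forall n, mu (A n) = c) -> c <= 0.
Proof.
  intros HA Hdisj Hc.
  apply Rnot_lt_le; intro Hpos.
  apply (infinite_sum_const_pos c (mu (fun x => exists n, A n x)) Hpos).
  replace (fun _ : nat => c) with (fun n => mu (A n)).
  - exact (proj2 (proj2 Hmu) A HA Hdisj).
  - apply functional_extensionality; exact Hc.
Qed.

End Measure.

Definition ball {X : Type} (d : X -> X -> R) (x : X) (r : R) : X -> Prop :=
  fun z => d x z < r.

Section Metric.
Context {X : Type} (d : X -> X -> R).
Hypothesis Hd : is_metric d.

Lemma ball_open (x : X) (r : R) : Defs.open_set d (ball d x r).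
Proof.
  intros y Hy; exists (r - d x y); split.
  - unfold ball in Hy; lra.
  - intros z Hz; unfold ball in *.
    destruct Hd as [_ [_ [_ Htri]]]; pose proof (Htri x y z); lra.
Qed.

Lemma borel_ball (x : X) (r : R) : borel d (ball d x r).
Proof. apply borel_open, ball_open. Qed.

Lemma ball_half_disjoint (x y z : X) (eps : R) :
  eps <= d x y -> ball d x (eps / 2) z -> ball d y (eps / 2) z -> False.
Proof.
  unfold ball; destruct Hd as [_ [_ [Hsym Htri]]].
  intros Hxy Hx Hy; pose proof (Htri x z y); rewrite (Hsym z y) in *; lra.
Qed.

Lemma measure_null_balls_full (mu : (X -> Prop) -> R) (r : R) :
  finite_borel_measure d mu -> separable d -> 0 < r ->
  (forall x, mu (ball d x r) = 0) -> mu (fun _ => True) = 0.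
Proof.
  intros Hmu [D [[f Hf] HD]] Hr Hnull.
  (* the balls around the dense set D, indexed through the injection f *)
  set (A := fun n z => exists y, D y /\ f y = n /\ ball d y r z).
  assert (HA : forall n, borel d (A n)).
  { intro n; apply borel_open; intros z [y [Hy [Hfy Hz]]].
    destruct (ball_open y r z Hz) as [eps [Heps Hball]].
    exists eps; split; auto; intros w Hw; exists y; auto. }
  assert (HAnull : forall n, mu (A n) = 0).
  { intro n; apply Rle_antisym; [|apply (measure_ge0 d mu Hmu), HA].
    destruct (classic (exists y, D y /\ f y = n)) as [[y [Hy Hfy]]|Hnone].
    - rewrite <- (Hnull y); apply (measure_le d mu Hmu); auto using borel_ball.
      intros z [y' [Hy' [Hfy' Hz]]].
      replace y with y' by (apply Hf; auto; congruence); exact Hz.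
    - rewrite <- (proj1 Hmu); apply (measure_le d mu Hmu); auto using borel_False.
      intros z [y [Hy [Hfy _]]]; apply Hnone; eauto. }
  replace (fun _ : X => True) with (fun z => exists n, A n z).
  - apply (measure_union_null d mu Hmu); auto.
  - apply pred_ext; intro z; split; auto; intros _.
    destruct (HD z r Hr) as [y [Hy Hzy]].
    exists (f y), y; repeat split; auto; unfold ball.
    destruct Hd as [_ [_ [Hsym _]]]; rewrite Hsym; exact Hzy.
Qed.

Lemma not_totally_bounded_far_points (P : X -> Prop) :
  dense_set d P -> ~ totally_bounded d ->
  exists eps, 0 < eps /\
    forall l : list X, exists p, P p /\ forall y, In y l -> eps <= d p y.
Proof.
  intros HP Hntb.
  apply not_all_ex_not in Hntb as [eps Hntb].
  apply imply_to_and in Hntb as [Heps Hnocover].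
  exists (eps / 2); split; [lra|]; intro l.
  pose proof (not_ex_all_not _ _ Hnocover l) as Hl.
  apply not_all_ex_not in Hl as [x Hx].
  destruct (HP x (eps / 2)) as [p [Hp Hxp]]; [lra|].
  exists p; split; auto; intros y Hy.
  assert (Hxy : eps <= d x y) by (apply Rnot_lt_le; intro; apply Hx; eauto).
  destruct Hd as [_ [_ [_ Htri]]]; pose proof (Htri x p y); lra.
Qed.

Lemma far_points_separated_seq (P : X -> Prop) (eps : R) :
  (forall l : list X, exists p, P p /\ forall y, In y l -> eps <= d p y) ->
  exists u : nat -> X, (forall n, P (u n)) /\
    forall m n, m <> n -> eps <= d (u m) (u n).
Proof.
  intro Hfar; destruct (choice _ Hfar) as [F HF].
  set (prefix := fix prefix n :=
         match n with 0%nat => nil | S n => F (prefix n) :: prefix n end).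
  assert (Hin : forall m n, (m < n)%nat -> In (F (prefix m)) (prefix n)).
  { intros m n; induction n as [|n IH]; intro Hmn; [lia|]; simpl.
    destruct (Nat.eq_dec m n) as [->|]; [left | right; apply IH; lia]; auto. }
  exists (fun n => F (prefix n)); split; [intro n; apply HF|].
  intros m n Hmn; destruct Hd as [_ [_ [Hsym _]]].
  destruct (proj1 (Nat.lt_gt_cases m n) Hmn).
  - rewrite Hsym; apply HF, Hin; auto.
  - apply HF, Hin; auto.
Qed.

End Metric.

Definition orbit {G X : Type} (act : G -> X -> X) (x : X) : X -> Prop :=
  fun y => exists g, y = act g x.

Section Orbit.
Context {X G : Type} (d : X -> X -> R) (mul : G -> G -> G) (inv : G -> G) (e : G)
  (act : G -> X -> X) (mu : (X -> Prop) -> R).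
Hypotheses (Hd : is_metric d) (Hgroup : is_group mul inv e)
  (Hact : is_action mul e act) (Hiso : acts_by_isometries d act)
  (Hmu : finite_borel_measure d mu) (Hinv : invariant_measure d act mu).

Lemma measure_ball_act (g : G) (x : X) (r : R) :
  mu (ball d (act g x) r) = mu (ball d x r).
Proof.
  rewrite <- (Hinv (inv g) (ball d x r)) by (apply borel_ball; auto).
  f_equal; apply pred_ext; intro z; unfold ball.
  rewrite <- (Hiso g x (act (inv g) z)), <- (proj2 Hact),
    (proj2 (proj2 (proj2 Hgroup) g)), (proj1 Hact).
  tauto.
Qed.

Lemma measure_ball_orbit_pos (x0 : X) (r : R) :
  separable d -> dense_set d (orbit act x0) -> mu (fun _ => True) <> 0 -> 0 < r ->
  0 < mu (ball d x0 r).
Proof.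
  intros Hsep Hdense Hnz Hr.
  destruct (Rle_lt_or_eq_dec _ _ (measure_ge0 d mu Hmu _ (borel_ball d Hd x0 r)))
    as [|Hzero]; auto.
  exfalso; apply Hnz.
  apply (measure_null_balls_full d Hd mu (r / 2)); auto; [lra|]; intro x.
  apply Rle_antisym; [|apply (measure_ge0 d mu Hmu), borel_ball; auto].
  destruct (Hdense x (r / 2)) as [y [[g ->] Hxy]]; [lra|].
  rewrite Hzero, <- (measure_ball_act g x0 r).
  apply (measure_le d mu Hmu); auto using borel_ball.
  intros z Hz; unfold ball in *; destruct Hd as [_ [_ [Hsym Htri]]].
  pose proof (Htri (act g x0) x z); rewrite (Hsym (act g x0) x) in *; lra.
Qed.

End Orbit.

Theorem mainTheorem6
  (X : Type) (d : X -> X -> R) (Hmetric : is_metric d) (Hsep : separable d)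
  (G : Type) (mul : G -> G -> G) (inv : G -> G) (e : G)
  (Hgroup : is_group mul inv e)
  (act : G -> X -> X) (Hact : is_action mul e act)
  (Hiso : acts_by_isometries d act)
  (Hdense : has_dense_orbit d act)
  (mu : (X -> Prop) -> R)
  (Hmu : finite_borel_measure d mu)
  (Hnz : mu (fun _ => True) <> 0)
  (Hinv : invariant_measure d act mu) :
  totally_bounded d.
Proof.
  destruct Hdense as [x0 Hx0].
  assert (Horbit : dense_set d (orbit act x0)).
  { intros z eps Heps; destruct (Hx0 z eps Heps) as [g Hg].
    exists (act g x0); split; [exists g|]; auto. }
  apply NNPP; intro Hntb.
  destruct (not_totally_bounded_far_points d Hmetric _ Horbit Hntb) as [eps [Heps Hfar]].
  destruct (far_points_separated_seq d Hmetric _ _ Hfar) as [u [Hu Hsep_u]].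
  apply (Rlt_not_le _ _
    (measure_ball_orbit_pos d mul inv e act mu Hmetric Hgroup Hact Hiso Hmu Hinv
       x0 (eps / 2) Hsep Horbit Hnz ltac:(lra))).
  apply (measure_disjoint_const_le0 d mu Hmu (fun n => ball d (u n) (eps / 2))).
  - intro n; apply borel_ball; auto.
  - intros n m z Hnm; apply (ball_half_disjoint d Hmetric _ _ z eps), Hsep_u, Hnm.
  - intro n; destruct (Hu n) as [g ->].
    apply (measure_ball_act d mul inv e act mu Hmetric Hgroup Hact Hiso Hinv).
Qed.
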